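(* Let $k_0$ be a field with $\operatorname{char}k_0\neq3$. Let $T\subset E_6^{\mathrm{ad}}$ be a split maximal torus with root system $\Phi\subset X(T)$ and Weyl group $W$. There exists a surjective homomorphism $\varepsilon:X(T)\to\mathbb{F}_3^2$ such that $\varepsilon(\alpha)\neq0$ for all $\alpha\in\Phi$, $X(T)^{W(\varepsilon)_3}=\{0\}$ for a Sylow $3$-subgroup $W(\varepsilon)_3$ of $W(\varepsilon)$, and $\operatorname{Rank}(W(\varepsilon),X(T);3)\geq12$.
   Context: $E_6^{\mathrm{ad}}$ is the split adjoint group of type $E_6$ over $k_0$. $W(\varepsilon)=\{w\in W:\varepsilon(w.\chi)=\varepsilon(\chi)\ \forall\chi\in X(T)\}$. For a finite group $S$ acting on a finitely generated abelian group $\mathcal{U}$ with Sylow $p$-subgroup $S_p$, $\operatorname{Rank}(S,\mathcal{U};p)$ is the minimal size of an $S_p$-invariant subset of $\mathcal{U}$ generating a subgroup of finite index prime to $p$. *)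

From HB Require Import structures.
From mathcomp Require Import all_boot all_order all_algebra.
Set Implicit Arguments. Unset Strict Implicit. Unset Printing Implicit Defensive.
Import Order.TTheory GRing.Theory Num.Theory.
Local Open Scope ring_scope.

(* X(T) of the adjoint group is the root lattice; we use coordinates   *)
(* with respect to the simple roots alpha_0..alpha_5 (Bourbaki         *)
(* numbering 1..6 shifted by one: chain 1-3-4-5-6, node 2 attached to  *)
(* node 4).  Characters are row vectors 'rV[int]_6.                    *)

Definition charX := 'rV[int]_6.

Definition e6_edge (i j : 'I_6) : bool :=
  let a := nat_of_ord i in let b := nat_of_ord j in
  [|| (a == 0%N) && (b == 2%N), (a == 2%N) && (b == 0%N),
      (a == 2%N) && (b == 3%N), (a == 3%N) && (b == 2%N),
      (a == 3%N) && (b == 4%N), (a == 4%N) && (b == 3%N),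
      (a == 4%N) && (b == 5%N), (a == 5%N) && (b == 4%N),
      (a == 1%N) && (b == 3%N) | (a == 3%N) && (b == 1%N)].

Definition cartanE6 : 'M[int]_6 :=
  \matrix_(i, j) (if i == j then 2 else if e6_edge i j then -1 else 0).

Definition simple_root (i : 'I_6) : charX := delta_mx 0 i.

(* Simple reflection s_i acting on row vectors by right multiplication:
   v *m sref i = v - <v, alpha_i^vee> alpha_i. *)
Definition sref (i : 'I_6) : 'M[int]_6 :=
  1%:M - \matrix_(j, k) (cartanE6 j i * (k == i)%:R).

Definition act (w : 'M[int]_6) (x : charX) : charX := x *m w.

Definition inW (w : 'M[int]_6) : Prop :=
  exists s : seq 'I_6, w = \prod_(i <- s) sref i.

Definition is_root (a : charX) : Prop :=
  exists w i, inW w /\ a = act w (simple_root i).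

Definition Weps (eps : charX -> 'rV['F_3]_2) (w : 'M[int]_6) : Prop :=
  inW w /\ forall x : charX, eps (act w x) = eps x.

Definition has_card (G : 'M[int]_6 -> Prop) (n : nat) : Prop :=
  exists s : seq 'M[int]_6, [/\ uniq s, size s = n & forall x, G x <-> x \in s].

Definition is_subgroup (G P : 'M[int]_6 -> Prop) : Prop :=
  [/\ forall x, P x -> G x, P 1,
      forall x y, P x -> P y -> P (x * y)
    & forall x, P x -> exists y, P y /\ x * y = 1 /\ y * x = 1].

Definition is_Sylow (p : nat) (G P : 'M[int]_6 -> Prop) : Prop :=
  is_subgroup G P /\
  exists nG nP, [/\ has_card G nG, has_card P nP & nP = (nG`_p)%N].

Definition in_span (A : seq charX) (v : charX) : Prop :=
  exists c : 'I_(size A) -> int, v = \sum_(i < size A) (A`_i *~ c i).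

(* The subgroup generated by A has finite index, prime to p:
   s is a complete irredundant system of coset representatives of
   X(T) / <A>, and its size (the index) is coprime to p. *)
Definition finite_index_prime_to (A : seq charX) (p : nat) : Prop :=
  exists s : seq charX,
    [/\ uniq s,
        forall x : charX, exists2 r, r \in s & in_span A (x - r),
        forall r1 r2, r1 \in s -> r2 \in s -> in_span A (r1 - r2) -> r1 = r2
      & coprime (size s) p].

(* Rank(S, X(T); p) >= n : every S_p-invariant subset of X(T) generating
   a subgroup of finite index prime to p has at least n elements (for
   any Sylow p-subgroup S_p of S; all are conjugate).  Finite subsets are
   given as sequences; their cardinality is size (undup A).  Infinite
   subsets trivially have size >= n. *)
Definition Rank_ge (S : 'M[int]_6 -> Prop) (p n : nat) : Prop :=
  forall P, is_Sylow p S P ->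
  forall A : seq charX,
    (forall a w, a \in A -> P w -> act w a \in A) ->
    finite_index_prime_to A p ->
    (n <= size (undup A))%N.

(* Take eps(alpha_i) = (1,0) for the branch node (index 3 here) and (0,1) for
   the five other simple roots; a finite check shows that eps kills no root.
   The rows of any w in W(eps) are roots with the Cartan Gram matrix and the
   eps-values of the simple roots; a search over such frames, together with the
   fact that W fixes 3 omega_1 modulo 3 (which excludes the automorphisms -w of
   the root system), leaves exactly 27 matrices, each of them a word in two
   explicit elements x, y.  So W(eps) is a group of order 27, its own Sylow
   3-subgroup, and the only vector fixed by both x and y is 0.
   For the rank: if <A> has finite index prime to 3, translation by any e
   permutes a system of coset representatives, so every integral linear form
   divisible by 3 on A is divisible by 3 everywhere.  Applied to the first
   coordinate of eps and to det(eps a1, eps -), this gives a1, a2 in A with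
   eps a1, eps a2 linearly independent.  Modulo 3, every vector with nonzero
   eps has at least 9 images under W(eps); the orbits of a1 and a2 are disjoint
   since eps is constant on orbits, so A has at least 18 > 12 elements. *)

From HB Require Import structures.
From mathcomp Require Import all_boot all_order all_algebra.
From mathcomp Require Import zify.
From Stdlib Require Import ClassicalEpsilon.

Set Implicit Arguments.
Unset Strict Implicit.
Unset Printing Implicit Defensive.

Import GRing.Theory.
Local Open Scope ring_scope.

Lemma delta_mul_mx_delta (R : comNzRingType) n (C : 'M[R]_n) (i : 'I_n) :
  delta_mx i i *m C *m delta_mx i i = C i i *: delta_mx i i.
Proof.
have E : delta_mx i i = (delta_mx i 0 : 'M[R]_(n, 1)) *m delta_mx 0 i.
  by rewrite mul_delta_mx.
rewrite {1 2}E !mulmxA -(mulmxA _ (delta_mx 0 i)) -rowE -(mulmxA (delta_mx i 0)) -colE.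
by rewrite [col i _]mx11_scalar !mxE mul_mx_scalar -scalemxAl E.
Qed.

Lemma reflection_form_invariant (R : comNzRingType) n (C : 'M[R]_n) (i : 'I_n) :
  C^T = C -> C i i = 2 ->
  (1%:M - C *m delta_mx i i) *m C *m (1%:M - C *m delta_mx i i)^T = C.
Proof.
move=> symC Cii; rewrite linearB /= trmx1 trmx_mul symC trmx_delta.
rewrite mulmxBl mul1mx mulmxBr mulmx1 mulmxBl !mulmxA.
have -> : C *m delta_mx i i *m C *m delta_mx i i *m C = 2 *: (C *m delta_mx i i *m C).
  have -> : C *m delta_mx i i *m C *m delta_mx i i *m C =
            C *m (delta_mx i i *m C *m delta_mx i i) *m C by rewrite !mulmxA.
  by rewrite delta_mul_mx_delta Cii -scalemxAr -scalemxAl.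
by rewrite scaler_nat mulr2n opprB addrK subrK.
Qed.

Lemma mulmx_delta_diag (R : pzRingType) m n (A : 'M[R]_(m, n)) (i : 'I_n) :
  A *m delta_mx i i = \matrix_(j, k) (A j i * (k == i)%:R).
Proof.
apply/matrixP => j k; rewrite !mxE (bigD1 i) //= big1 ?addr0 => [|l /negbTE nli].
  by rewrite mxE eqxx.
by rewrite mxE nli mulr0.
Qed.

Lemma additive_mulmx_invariant n (V : zmodType) (f : {additive 'rV[int]_n -> V})
    (w : 'M[int]_n) :
  (forall i, f (delta_mx 0 i *m w) = f (delta_mx 0 i)) -> forall x, f (x *m w) = f x.
Proof.
move=> fw x; rewrite [x]row_sum_delta mulmx_suml !raddf_sum; apply: eq_bigr => i _.
by rewrite -scalemxAl -[x 0 i]intz !scaler_int !raddfMz fw.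
Qed.

Lemma pgroup_Sylow_full (p n : nat) (G P : 'M[int]_6 -> Prop) :
  has_card G n -> (n`_p)%N = n -> is_Sylow p G P -> forall w, G w -> P w.
Proof.
move=> [sG [uG szG memG]] pn.
move=> [[PG _ _ _] [nG [nP [[sG' [uG' szG' memG']] [sP [uP szP memP]] nPG]]]].
have sGG' : sG =i sG'.
  by move=> w; apply/idP/idP => ?; [apply/memG'/memG | apply/memG/memG'].
have szP_G : (size sG <= size sP)%N.
  by rewrite szP nPG -szG' -(perm_size (uniq_perm uG uG' sGG')) szG pn.
have sPG : {subset sP <= sG} by move=> w /memP /PG /memG.
have [_ eqPG] := uniq_min_size uP sPG szP_G.
by move=> w /memG; rewrite -eqPG => /memP.
Qed.

Lemma size_undup_map (T1 T2 : eqType) (f : T1 -> T2) (s : seq T1) :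
  (size (undup (map f s)) <= size (undup s))%N.
Proof.
rewrite -(size_map f); apply: uniq_leq_size (undup_uniq _) _ => y.
by rewrite mem_undup => /mapP [x xs ->]; rewrite map_f ?mem_undup.
Qed.

(** * Subgroups of finite index prime to p *)

Definition lin_form (c : 'cV[int]_6) (x : charX) : int := (x *m c) 0 0.

Lemma lin_formD c x y : lin_form c (x + y) = lin_form c x + lin_form c y.
Proof. by rewrite /lin_form mulmxDl !mxE. Qed.

Lemma lin_formB c x y : lin_form c (x - y) = lin_form c x - lin_form c y.
Proof. by rewrite /lin_form mulmxBl !mxE. Qed.

Lemma lin_form0 c : lin_form c 0 = 0.
Proof. by rewrite /lin_form mul0mx mxE. Qed.

Lemma in_spanB (A : seq charX) u v : in_span A u -> in_span A v -> in_span A (u - v).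
Proof.
case=> k ->; case=> l ->; exists (fun i => k i - l i).
by rewrite -sumrB; apply: eq_bigr => i _; rewrite mulrzBr.
Qed.

Lemma span_form_dvd (A : seq charX) (p : nat) c v :
  {in A, forall a, (p %| lin_form c a)%Z} -> in_span A v -> (p %| lin_form c v)%Z.
Proof.
move=> A_dvd [k ->]; rewrite /lin_form mulmx_suml summxE; apply: rpred_sum => i _.
rewrite -scaler_int intz -scalemxAl mxE.
by apply/dvdz_mull/A_dvd/mem_nth.
Qed.

Lemma prime_index_form_dvd (A : seq charX) (p : nat) c (e : charX) :
  finite_index_prime_to A p -> {in A, forall a, (p %| lin_form c a)%Z} ->
  (p %| lin_form c e)%Z.
Proof.
move=> [s [s_uniq s_cover s_sep s_cop]] A_dvd.
have cover r : exists r', r' \in s /\ in_span A (r + e - r').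
  by have [r' ? ?] := s_cover (r + e); exists r'.
pose t r := proj1_sig (constructive_indefinite_description _ (cover r)).
have t_spec r : t r \in s /\ in_span A (r + e - t r).
  exact: proj2_sig (constructive_indefinite_description _ (cover r)).
have t_inj : {in s &, injective t}.
  move=> r1 r2 r1s r2s t12; apply: s_sep => //.
  have := in_spanB (t_spec r1).2 (t_spec r2).2.
  by rewrite t12 opprB addrA subrK [r2 + e]addrC addrKA.
have ts_uniq : uniq (map t s) by rewrite map_inj_in_uniq.
have ts_sub : {subset map t s <= s} by move=> _ /mapP [r _ ->]; exact: (t_spec r).1.
have [_ ts_s] := uniq_min_size ts_uniq ts_sub (eq_leq (esym (size_map t s))).
have sum_t : \sum_(r <- s) lin_form c (t r) = \sum_(r <- s) lin_form c r.
  by rewrite -(big_map t xpredT); apply/perm_big/uniq_perm.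
have : (p %| \sum_(r <- s) lin_form c (r + e - t r))%Z.
  by apply: rpred_sum => r _; apply: span_form_dvd A_dvd (t_spec r).2.
under eq_bigr do rewrite lin_formB lin_formD.
rewrite sumrB big_split /= sum_t addrAC subrr add0r.
rewrite big_const_seq count_predT iter_addr_0 -mulr_natr natz Gauss_dvdzl //.
by rewrite coprimezE /= coprime_sym.
Qed.

Lemma prime_index_form_witness (A : seq charX) (p : nat) c (e : charX) :
  finite_index_prime_to A p -> ~~ (p %| lin_form c e)%Z ->
  exists2 a, a \in A & ~~ (p %| lin_form c a)%Z.
Proof.
move=> A_index ce; apply/hasP; apply: contraNT ce => /hasPn A_dvd.
by apply: prime_index_form_dvd A_index _ => a /A_dvd; rewrite negbK.
Qed.

(** * The Weyl group of E6 and its invariant form *)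

Lemma e6_edge_sym (i j : 'I_6) : e6_edge i j = e6_edge j i.
Proof. by case: i j => [[|[|[|[|[|[|//]]]]]] ?] [[|[|[|[|[|[|//]]]]]] ?]. Qed.

Lemma cartanE6_sym : cartanE6^T = cartanE6.
Proof. by apply/matrixP => i j; rewrite !mxE eq_sym e6_edge_sym. Qed.

Lemma srefE i : sref i = 1%:M - cartanE6 *m delta_mx i i.
Proof. by rewrite /sref mulmx_delta_diag. Qed.

Lemma sref_form_invariant i : sref i *m cartanE6 *m (sref i)^T = cartanE6.
Proof. by rewrite srefE reflection_form_invariant ?cartanE6_sym // mxE eqxx. Qed.

Definition word_mx (s : seq 'I_6) : 'M[int]_6 := \prod_(i <- s) sref i.

Lemma word_mx_cat s t : word_mx (s ++ t) = word_mx s *m word_mx t.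
Proof. by rewrite /word_mx big_cat. Qed.

Lemma word_mx_form_invariant s : word_mx s *m cartanE6 *m (word_mx s)^T = cartanE6.
Proof.
elim: s => [|i s IH]; first by rewrite /word_mx big_nil mul1mx trmx1 mulmx1.
rewrite -cat1s word_mx_cat trmx_mul.
have -> : word_mx [:: i] *m word_mx s *m cartanE6 *m ((word_mx s)^T *m (word_mx [:: i])^T)
  = word_mx [:: i] *m (word_mx s *m cartanE6 *m (word_mx s)^T) *m (word_mx [:: i])^T.
  by rewrite !mulmxA.
by rewrite IH /word_mx big_seq1 sref_form_invariant.
Qed.

Definition form (x y : charX) : int := (x *m cartanE6 *m y^T) 0 0.

Lemma form_word_mx s x y : form (x *m word_mx s) (y *m word_mx s) = form x y.
Proof.
rewrite /form trmx_mul.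
have -> : x *m word_mx s *m cartanE6 *m ((word_mx s)^T *m y^T)
  = x *m (word_mx s *m cartanE6 *m (word_mx s)^T) *m y^T by rewrite !mulmxA.
by rewrite word_mx_form_invariant.
Qed.

Lemma word_mx_fixes_mod (R : nzRingType) (v : charX) s :
  map_mx (intr : int -> R) (v *m cartanE6) = 0 ->
  map_mx (intr : int -> R) (v *m word_mx s) = map_mx intr v.
Proof.
move=> vC0; elim: s => [|i s IH]; first by rewrite /word_mx big_nil mulmx1.
rewrite -cat1s word_mx_cat mulmxA [LHS]map_mxM -[RHS]IH [RHS]map_mxM; congr (_ *m _).
by rewrite /word_mx big_seq1 srefE mulmxBr mulmx1 mulmxA map_mxB map_mxM vC0 mul0mx subr0.
Qed.

(** * Computable lists of coordinates *)

Definition o0 : 'I_6 := @Ordinal 6 0 isT.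
Definition o1 : 'I_6 := @Ordinal 6 1 isT.
Definition o2 : 'I_6 := @Ordinal 6 2 isT.
Definition o3 : 'I_6 := @Ordinal 6 3 isT.
Definition o4 : 'I_6 := @Ordinal 6 4 isT.
Definition o5 : 'I_6 := @Ordinal 6 5 isT.

(* Unlike [enum 'I_6], this list is evaluated by [vm_compute]. *)
Definition ords : seq 'I_6 := [:: o0; o1; o2; o3; o4; o5].

Lemma ordsE : ords = enum 'I_6.
Proof. by apply: (inj_map val_inj); rewrite val_enum_ord. Qed.

Lemma mem_ords (i : 'I_6) : i \in ords.
Proof. by rewrite ordsE mem_enum. Qed.

Lemma nth_map_ords T (x0 : T) (f : 'I_6 -> T) (j : 'I_6) :
  nth x0 [seq f i | i <- ords] j = f j.
Proof. by rewrite (nth_map j) ordsE ?size_enum_ord ?nth_ord_enum. Qed.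

Section RowSeq.

Variable R : pzRingType.

Definition dotseq (u v : seq R) : R := foldr (fun p s => p.1 * p.2 + s) 0 (zip u v).

Lemma dotseq_map_ords (f g : 'I_6 -> R) :
  dotseq [seq f i | i <- ords] [seq g i | i <- ords] = \sum_i f i * g i.
Proof.
rewrite -big_enum -ordsE.
by elim: ords => [|i s IH]; rewrite ?big_nil // big_cons -IH.
Qed.

Definition rowseq (x : 'rV[R]_6) : seq R := [seq x 0 j | j <- ords].
Definition mxseq (A : 'M[R]_6) : seq (seq R) := [seq rowseq (row i A) | i <- ords].
Definition mulseq (u : seq R) (M : seq (seq R)) : seq R :=
  [seq dotseq u [seq r`_j | r <- M] | j : 'I_6 <- ords].

Lemma nth_rowseq x (j : 'I_6) : (rowseq x)`_j = x 0 j.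
Proof. exact: nth_map_ords. Qed.

Lemma rowseq_inj : injective rowseq.
Proof. by move=> x y exy; apply/rowP => j; rewrite -!nth_rowseq exy. Qed.

Lemma mxseq_inj : injective mxseq.
Proof.
move=> A B eAB; apply/row_matrixP => i; apply: rowseq_inj.
by rewrite -(nth_map_ords [::] (fun i => rowseq (row i A))) -/(mxseq A) eAB nth_map_ords.
Qed.

Lemma nth_mxseq A (i : 'I_6) : nth [::] (mxseq A) i = rowseq (delta_mx 0 i *m A).
Proof. by rewrite nth_map_ords rowE. Qed.

Lemma rowseq_mul x A : rowseq (x *m A) = mulseq (rowseq x) (mxseq A).
Proof.
apply: eq_map => j; rewrite -map_comp mxE -dotseq_map_ords.
by congr dotseq; apply: eq_map => i /=; rewrite nth_rowseq mxE.
Qed.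

End RowSeq.

Arguments rowseq_inj {R}.
Arguments mxseq_inj {R}.

Lemma mxseq_map (R S : pzRingType) (f : {rmorphism R -> S}) (A : 'M[R]_6) :
  mxseq (map_mx f A) = map (map f) (mxseq A).
Proof. by rewrite /mxseq /rowseq /= !mxE. Qed.

Definition unit_seq (i : nat) : seq int := [seq (i == j)%:R | j : 'I_6 <- ords].

Lemma rowseq_simple_root (i : 'I_6) : rowseq (simple_root i) = unit_seq i.
Proof. by apply: eq_map => j; rewrite mxE eq_sym. Qed.

Lemma rowseq0 : rowseq (0 : charX) = nseq 6 0.
Proof. by rewrite /rowseq /= !mxE. Qed.

Definition cartan_entry (i j : 'I_6) : int :=
  if i == j then 2 else if e6_edge i j then -1 else 0.

Definition cartan_seq : seq (seq int) := [seq [seq cartan_entry i j | j <- ords] | i <- ords].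

Definition form_seq (u v : seq int) : int := dotseq (mulseq u cartan_seq) v.

Lemma mxseq_cartan : mxseq cartanE6 = cartan_seq.
Proof. by apply: eq_map => i; apply: eq_map => j; rewrite !mxE. Qed.

Lemma form_rowseq x y : form x y = form_seq (rowseq x) (rowseq y).
Proof.
rewrite /form /form_seq -mxseq_cartan -rowseq_mul dotseq_map_ords mxE.
by apply: eq_bigr => j _; rewrite [y^T _ _]mxE.
Qed.

Definition coroot_seq (i : 'I_6) : seq int := [seq cartan_entry j i | j <- ords].

Definition sref_seq (r : seq int) (i : 'I_6) : seq int :=
  let c := dotseq r (coroot_seq i) in [seq if k == i then r`_k - c else r`_k | k <- ords].

Lemma rowseq_mul_sref x i : rowseq (x *m sref i) = sref_seq (rowseq x) i.
Proof.
apply: eq_map => k; rewrite srefE mulmxBr mulmx1 mulmx_delta_diag !mxE nth_rowseq.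
under eq_bigr do rewrite mxE mulrA.
rewrite -mulr_suml; case: eqP => [->|_]; last by rewrite mulr0 subr0.
by rewrite mulr1 dotseq_map_ords; under eq_bigr do rewrite mxE.
Qed.

Lemma rowseq_mul_word x s : rowseq (x *m word_mx s) = foldl sref_seq (rowseq x) s.
Proof.
elim: s x => [|i s IH] x; first by rewrite /word_mx big_nil mulmx1.
by rewrite -cat1s word_mx_cat mulmxA IH /word_mx big_seq1 rowseq_mul_sref.
Qed.

Definition word_seq (s : seq 'I_6) : seq (seq int) :=
  [seq foldl sref_seq (unit_seq i) s | i : 'I_6 <- ords].

Lemma mxseq_word s : mxseq (word_mx s) = word_seq s.
Proof. by apply: eq_map => i; rewrite rowE rowseq_mul_word rowseq_simple_root. Qed.

Definition add_reflections (rs : seq (seq int)) : seq (seq int) :=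
  undup (rs ++ [seq sref_seq r i | r <- rs, i <- ords]).

(* The number of rounds only has to be large enough: closure under the simple
   reflections is checked by [roots_seq_closed]. *)
Definition roots_seq : seq (seq int) :=
  iter 11 add_reflections [seq unit_seq i | i : 'I_6 <- ords].

Lemma roots_seq_closed :
  all (fun r => all (fun i => sref_seq r i \in roots_seq) ords) roots_seq.
Proof. by vm_compute. Qed.

Lemma unit_seq_roots : all (fun i : 'I_6 => unit_seq i \in roots_seq) ords.
Proof. by vm_compute. Qed.

Lemma foldl_sref_seq_roots r s : r \in roots_seq -> foldl sref_seq r s \in roots_seq.
Proof.
elim: s r => [|i s IH] r r_root; first exact: r_root.
exact: IH (allP (allP roots_seq_closed r r_root) i (mem_ords i)).
Qed.

Lemma rowseq_root_word (i : 'I_6) s : rowseq (simple_root i *m word_mx s) \in roots_seq.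
Proof.
rewrite rowseq_mul_word rowseq_simple_root; apply: foldl_sref_seq_roots.
exact: (allP unit_seq_roots i (mem_ords i)).
Qed.

Definition eps_mx : 'M[int]_(6, 2) :=
  \matrix_(i, j) (if j == 0 :> nat then (i == o3)%:R else (i != o3)%:R).

Definition eps_fun (x : charX) : 'rV['F_3]_2 := map_mx intr (x *m eps_mx).

Lemma eps_funB : {morph eps_fun : x y / x - y}.
Proof. by move=> x y; rewrite /eps_fun mulmxBl map_mxB. Qed.

HB.instance Definition _ := GRing.isZmodMorphism.Build charX 'rV['F_3]_2 eps_fun eps_funB.

Definition eps : {additive charX -> 'rV['F_3]_2} := eps_fun.

Definition eps_seq (R : pzRingType) (r : seq R) : seq R :=
  [:: r`_3; r`_0 + r`_1 + r`_2 + r`_4 + r`_5].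

Lemma mulmx_eps_mx x (j : 'I_2) : (x *m eps_mx) 0 j = (eps_seq (rowseq x))`_j.
Proof.
rewrite mxE -dotseq_map_ords.
by case: j => [[|[|//]] ?]; rewrite /= !mxE /dotseq /=; lia.
Qed.

Lemma intr_F3_eq (a b : int) : ((a%:~R : 'F_3) == b%:~R) = (3 %| a - b)%Z.
Proof. by rewrite -subr_eq0 -intrB (dvdz_pcharf (pchar_Fp (isT : prime 3))). Qed.

Definition eqmod3 (u v : seq int) : bool := all2 (fun a b => (3 %| a - b)%Z) u v.

Lemma all2_map_ords (r : rel int) (f g : 'I_6 -> int) :
  all2 r [seq f i | i <- ords] [seq g i | i <- ords] = all (fun i => r (f i) (g i)) ords.
Proof. by elim: ords => //= i s ->. Qed.

Lemma eqmod3_rowseq x y :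
  map_mx (intr : int -> 'F_3) x = map_mx intr y -> eqmod3 (rowseq x) (rowseq y).
Proof.
move=> exy; rewrite /eqmod3 all2_map_ords; apply/allP => j _.
by move/rowP/(_ j)/eqP: exy; rewrite !mxE intr_F3_eq.
Qed.

Lemma eps_eqP x y :
  reflect (eps x = eps y) (eqmod3 (eps_seq (rowseq x)) (eps_seq (rowseq y))).
Proof.
have epsE z (j : 'I_2) : eps z 0 j = ((eps_seq (rowseq z))`_j)%:~R.
  by rewrite mxE mulmx_eps_mx.
apply: (iffP idP) => [/and3P [e0 e1 _] | exy].
  by apply/rowP => j; apply/eqP; rewrite !epsE intr_F3_eq; case: j => [[|[|//]] ?].
have e (j : 'I_2) : (3 %| (eps_seq (rowseq x))`_j - (eps_seq (rowseq y))`_j)%Z.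
  by rewrite -intr_F3_eq -!epsE exy.
by apply/and3P; split; [exact: (e ord0) | exact: (e ord_max) |].
Qed.

Definition eps_col (j : 'I_2) : 'cV[int]_6 := col j eps_mx.

Lemma lin_form_eps_col x j : lin_form (eps_col j) x = (eps_seq (rowseq x))`_j.
Proof. by rewrite /lin_form /eps_col colE mulmxA -colE mxE mulmx_eps_mx. Qed.

Lemma eps_eq_dvd x y (j : 'I_2) :
  eps x = eps y -> (3 %| lin_form (eps_col j) x - lin_form (eps_col j) y)%Z.
Proof.
by rewrite !lin_form_eps_col => /eps_eqP /and3P [? ? _]; case: j => [[|[|//]] ?].
Qed.

Lemma eps_simple_root i (j : 'I_2) :
  eps (simple_root i) 0 j = ((eps_seq (unit_seq i))`_j)%:~R.
Proof. by rewrite /= /eps_fun mxE mulmx_eps_mx rowseq_simple_root. Qed.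

Lemma eps_surjective y : exists x : charX, eps x = y.
Proof.
exists (simple_root o3 *+ y 0 ord0 + simple_root o0 *+ y 0 ord_max).
apply/rowP => j; rewrite raddfD !raddfMn !mxE !mulmxnE !eps_simple_root.
case: j => [[|[|//]] ?]; rewrite /= ?mul0rn ?addr0 ?add0r natr_Zp;
  by congr (y 0 _); apply: val_inj.
Qed.

Lemma roots_eps_neq0 : all (fun r => ~~ eqmod3 (eps_seq r) [:: 0; 0]) roots_seq.
Proof. by vm_compute. Qed.

Lemma eps_root_neq0 a : is_root a -> eps a != 0.
Proof.
move=> [w [i [[s ->] ->]]]; apply/eqP; rewrite -(raddf0 eps) => /eps_eqP.
by rewrite rowseq0; apply/negP; exact: (allP roots_eps_neq0 _ (rowseq_root_word i s)).
Qed.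

(** * The elements of W(eps) *)

(* 3 omega_1 = (4,3,5,6,4,2) in root coordinates; since w omega_1 - omega_1 lies
   in the root lattice, W fixes it modulo 3. *)
Definition weight3_seq : seq int := [:: 1; 0; 2; 0; 1; 2].
Definition weight3 : charX := \row_j weight3_seq`_j.

Lemma rowseq_weight3 : rowseq weight3 = weight3_seq.
Proof. by rewrite /rowseq /= !mxE. Qed.

Lemma weight3_cartan_mod3 : map_mx (intr : int -> 'F_3) (weight3 *m cartanE6) = 0.
Proof.
have dvd3 : all (fun z => 3 %| z)%Z (mulseq weight3_seq cartan_seq) by vm_compute.
apply/rowP => j; rewrite [LHS]mxE [RHS]mxE; apply/eqP.
rewrite -(dvdz_pcharf (pchar_Fp (isT : prime 3))) -nth_rowseq rowseq_mul rowseq_weight3.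
by rewrite mxseq_cartan (allP dvd3) ?mem_nth.
Qed.

(* A frame is the list of the first rows of a candidate for W(eps): the images
   of the first simple roots. *)
Definition frame_row_ok (rows : seq (seq int)) (r : seq int) : bool :=
  let k := size rows in
  eqmod3 (eps_seq r) (eps_seq (unit_seq k)) &&
  all (fun i => form_seq (nth [::] rows i) r == form_seq (unit_seq i) (unit_seq k))
      (iota 0 k).

Definition extend_frames (Ls : seq (seq (seq int))) : seq (seq (seq int)) :=
  [seq rcons L r | L <- Ls, r <- [seq r <- roots_seq | frame_row_ok L r]].

Lemma mem_extend_frames (L : seq (seq int)) :
  (forall k, (k < size L)%N ->
     nth [::] L k \in roots_seq /\ frame_row_ok (take k L) (nth [::] L k)) ->
  L \in iter (size L) extend_frames [:: [::]].
Proof.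
elim/last_ind: L => [|L r IH] L_ok; first exact: mem_head.
rewrite size_rcons; apply: (allpairs_f_dep (fun L r => rcons L r)).
  apply: IH => k ltkL.
  have [] := L_ok k; first by rewrite size_rcons ltnW.
  by rewrite nth_rcons ltkL -cats1 takel_cat; [exact: conj | exact: ltnW].
have [] := L_ok (size L); first by rewrite size_rcons.
rewrite nth_rcons ltnn eqxx -cats1 take_size_cat => [r_root r_ok|//].
rewrite mem_filter r_ok andTb; exact: r_root.
Qed.

Definition fixes_weight3 (L : seq (seq int)) : bool :=
  eqmod3 (mulseq weight3_seq L) weight3_seq.

Definition Weps_candidates : seq (seq (seq int)) :=
  [seq L <- iter 6 extend_frames [:: [::]] | fixes_weight3 L].

Lemma Weps_mem_candidates w : Weps eps w -> mxseq w \in Weps_candidates.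
Proof.
case=> [[s ->] eps_w]; rewrite -/(word_mx s) mem_filter; apply/andP; split.
  rewrite /fixes_weight3 -rowseq_weight3 -rowseq_mul; apply: eqmod3_rowseq.
  exact/word_mx_fixes_mod/weight3_cartan_mod3.
rewrite -[6%N]/(size (mxseq (word_mx s))); apply: mem_extend_frames => k ltk6.
rewrite -[k]/(val (Ordinal ltk6)) nth_mxseq; split; first exact: rowseq_root_word.
rewrite /frame_row_ok size_takel; last exact: ltnW.
apply/andP; split.
  by rewrite -rowseq_simple_root; apply/eps_eqP; apply: eps_w.
apply/allP => j; rewrite mem_iota add0n => ltjk.
have ltj6 := ltn_trans ltjk ltk6.
rewrite nth_take // -[j]/(val (Ordinal ltj6)) nth_mxseq -!rowseq_simple_root.
by rewrite -!form_rowseq form_word_mx.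
Qed.

(* W(eps) is a Heisenberg group of order 27: x and y have order 3, their
   commutator z is central, and every element is x^a y^b z^c. *)
Definition x_word : seq 'I_6 := [:: o0; o2; o4; o5].
Definition y_word : seq 'I_6 := [:: o3; o1; o2; o0; o3; o2; o4; o3; o1; o5; o4; o3].
Definition z_word : seq 'I_6 := x_word ++ y_word ++ x_word ++ x_word ++ y_word ++ y_word.

Definition heis_word (a b c : nat) : seq 'I_6 :=
  flatten (nseq a x_word ++ nseq b y_word ++ nseq c z_word).

Definition Weps_words : seq (seq 'I_6) :=
  flatten [seq [seq heis_word a b c | b <- iota 0 3, c <- iota 0 3] | a <- iota 0 3].

Definition Weps_mats : seq 'M[int]_6 := map word_mx Weps_words.

Lemma Weps_candidates_words : all (mem (map word_seq Weps_words)) Weps_candidates.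
Proof. by vm_compute. Qed.

Lemma Weps_words_uniq : uniq (map word_seq Weps_words).
Proof. by vm_compute. Qed.

Lemma Weps_words_eps :
  all (fun L => all (fun i : 'I_6 =>
                       eqmod3 (eps_seq (nth [::] L i)) (eps_seq (unit_seq i))) ords)
      (map word_seq Weps_words).
Proof. by vm_compute. Qed.

Lemma Weps_word_mx s : s \in Weps_words -> Weps eps (word_mx s).
Proof.
move=> sW; split; first by exists s.
apply: additive_mulmx_invariant => i; apply/eps_eqP.
rewrite -nth_mxseq mxseq_word rowseq_simple_root.
exact: (allP (allP Weps_words_eps _ (map_f word_seq sW)) i (mem_ords i)).
Qed.

Lemma WepsP w : Weps eps w <-> w \in Weps_mats.
Proof.
split=> [/Weps_mem_candidates cand | /mapP [s sW ->]]; last exact: Weps_word_mx.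
have /mapP [s sW ws] := allP Weps_candidates_words _ cand.
apply/mapP; exists s; first exact: sW.
by apply: mxseq_inj; rewrite mxseq_word.
Qed.

Lemma Weps_card : has_card (Weps eps) 27.
Proof.
exists Weps_mats; split; last exact: WepsP.
  rewrite -(map_inj_uniq mxseq_inj) -map_comp.
  by rewrite (eq_map mxseq_word) Weps_words_uniq.
by rewrite size_map.
Qed.

Lemma Sylow_Weps_full P : is_Sylow 3 (Weps eps) P -> forall w, Weps eps w -> P w.
Proof. by apply: pgroup_Sylow_full Weps_card _; rewrite p_part. Qed.

Lemma x_y_fixed_eq0 (x : charX) :
  x *m word_mx x_word = x -> x *m word_mx y_word = x -> x = 0.
Proof.
move=> /(congr1 (@rowseq _)) hx /(congr1 (@rowseq _)) hy; apply: rowseq_inj.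
rewrite rowseq_mul mxseq_word in hx; rewrite rowseq_mul mxseq_word in hy.
vm_compute (word_seq x_word) in hx; vm_compute (word_seq y_word) in hy.
move: hx hy; rewrite /rowseq /= !mxE.
move: (x 0 o0) (x 0 o1) (x 0 o2) (x 0 o3) (x 0 o4) (x 0 o5) => a0 a1 a2 a3 a4 a5.
rewrite /mulseq /dotseq /= => - [e0 e1 e2 e3 e4 e5] [f0 f1 f2 f3 f4 f5].
congr [:: _; _; _; _; _; _]; lia.
Qed.

(** * Orbits and the rank bound *)

Definition F3_elems : seq 'F_3 := [:: 0; 1; 2].

Definition F3_vectors : seq (seq 'F_3) :=
  iter 6 (fun ls => [seq c :: l | c <- F3_elems, l <- ls]) [:: [::]].

Lemma mem_F3_vectors (l : seq 'F_3) : size l = 6%N -> l \in F3_vectors.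
Proof.
rewrite /F3_vectors => <-; elim: l => [|c l IH]; first exact: mem_head.
by apply: (allpairs_f (fun c l => c :: l)) IH; case: c => [[|[|[|//]]] ?].
Qed.

Definition large_orbit (Ms : seq (seq (seq 'F_3))) (r : seq 'F_3) : bool :=
  (eps_seq r == [:: 0; 0]) || (9 <= size (undup [seq mulseq r M | M <- Ms]))%N.

Lemma Weps_F3_orbits :
  all (large_orbit [seq map (map intr) (word_seq s) | s <- Weps_words]) F3_vectors.
Proof. by vm_compute. Qed.

Lemma rowseq_mod3_word (a : charX) s :
  rowseq (map_mx (intr : int -> 'F_3) (a *m word_mx s))
  = mulseq (rowseq (map_mx intr a)) (map (map intr) (word_seq s)).
Proof. by rewrite map_mxM rowseq_mul -mxseq_word mxseq_map. Qed.

Definition Weps_orbit (a : charX) : seq charX := undup [seq a *m w | w <- Weps_mats].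

Lemma Weps_orbit_eps a b : b \in Weps_orbit a -> eps b = eps a.
Proof.
by rewrite mem_undup => /mapP [_ /mapP [s sW ->] ->]; apply: (Weps_word_mx sW).2.
Qed.

Lemma Weps_orbit_size (a : charX) : eps a != 0 -> (9 <= size (Weps_orbit a))%N.
Proof.
pose r := map_mx (intr : int -> 'F_3) a.
have eps_r : eps a = \row_j (eps_seq (rowseq r))`_j.
  apply/rowP => j; rewrite /= /eps_fun [LHS]mxE mulmx_eps_mx [RHS]mxE.
  by case: j => [[|[|//]] ?]; rewrite /= !mxE ?rmorphD.
move=> eps_a; have := allP Weps_F3_orbits _ (@mem_F3_vectors (rowseq r) (erefl 6%N)).
rewrite /large_orbit; case: eqP => [eps_r0 | _]; last rewrite orFb => orbit_r.
  case/negP: eps_a; rewrite eps_r eps_r0; apply/eqP/rowP => j.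
  by rewrite !mxE; case: j => [[|[|//]] ?].
apply: (leq_trans orbit_r).
have -> : [seq mulseq (rowseq r) M | M <- [seq map (map intr) (word_seq s) | s <- Weps_words]]
    = map ((@rowseq _) \o map_mx intr) [seq a *m w | w <- Weps_mats].
  by rewrite /Weps_mats -!map_comp; apply: eq_map => s; rewrite /= rowseq_mod3_word.
exact: size_undup_map.
Qed.

Lemma Weps_rank : Rank_ge (Weps eps) 3 12.
Proof.
move=> P sylP A A_inv A_index.
have orbit_sub a : a \in A -> {subset Weps_orbit a <= A}.
  move=> aA b; rewrite mem_undup => /mapP [w /WepsP /(Sylow_Weps_full sylP) Pw ->].
  exact: A_inv aA Pw.
have [a1 a1A e0_a1] : exists2 a1, a1 \in A & ~~ (3 %| lin_form (eps_col ord0) a1)%Z.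
  apply: (prime_index_form_witness (e := simple_root o3) A_index).
  by rewrite lin_form_eps_col rowseq_simple_root.
pose u j := lin_form (eps_col j) a1.
pose c := u ord_max *: eps_col ord0 - u ord0 *: eps_col ord_max.
have lin_c x :
    lin_form c x = u ord_max * lin_form (eps_col ord0) x - u ord0 * lin_form (eps_col ord_max) x.
  by rewrite /lin_form mulmxBr -!scalemxAr !mxE.
have [a2 a2A c_a2] : exists2 a2, a2 \in A & ~~ (3 %| lin_form c a2)%Z.
  apply: (prime_index_form_witness (e := simple_root o0) A_index).
  by rewrite lin_c !lin_form_eps_col rowseq_simple_root /= mulr0 mulr1 sub0r rpredN.
have eps_a1 : eps a1 != 0.
  apply: contra e0_a1 => /eqP; rewrite -(raddf0 eps) => /(eps_eq_dvd ord0).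
  by rewrite lin_form0 subr0.
have eps_a2 : eps a2 != 0.
  apply: contra c_a2 => /eqP; rewrite -(raddf0 eps) => e20; rewrite lin_c.
  have := eps_eq_dvd ord0 e20; have := eps_eq_dvd ord_max e20; rewrite !lin_form0 !subr0.
  by move=> d1 d0; apply: rpredB; apply: dvdz_mull.
have eps12 : eps a1 != eps a2.
  apply: contra c_a2 => /eqP/esym e21.
  have -> : lin_form c a2 = lin_form c (a2 - a1).
    by rewrite lin_formB [lin_form c a1]lin_c mulrC subrr subr0.
  by rewrite lin_c !lin_formB; apply: rpredB; apply: dvdz_mull; apply: eps_eq_dvd.
have orbits_uniq : uniq (Weps_orbit a1 ++ Weps_orbit a2).
  rewrite cat_uniq; apply/and3P; split; [exact: undup_uniq | | exact: undup_uniq].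
  apply/hasPn => b /Weps_orbit_eps eb2; apply/negP => /Weps_orbit_eps eb1.
  by move: eps12; rewrite -eb1 eb2 eqxx.
have orbits_sub : {subset Weps_orbit a1 ++ Weps_orbit a2 <= undup A}.
  by move=> b; rewrite mem_cat mem_undup => /orP [] /orbit_sub; [apply | apply].
apply: leq_trans (uniq_leq_size orbits_uniq orbits_sub); rewrite size_cat.
exact: leq_trans _ (leq_add (Weps_orbit_size eps_a1) (Weps_orbit_size eps_a2)).
Qed.

Theorem proposition17p1 :
  exists eps : {additive 'rV[int]_6 -> 'rV['F_3]_2},
    [/\ forall y : 'rV['F_3]_2, exists x : charX, eps x = y,
        forall a : charX, is_root a -> eps a != 0,
        forall P, is_Sylow 3 (Weps eps) P ->
          forall x : charX, (forall w, P w -> act w x = x) -> x = 0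
      & Rank_ge (Weps eps) 3 12].
Proof.
exists eps; split; [exact: eps_surjective | exact: eps_root_neq0 | | exact: Weps_rank].
move=> P sylP x x_fixed.
by apply: x_y_fixed_eq0; apply/x_fixed/(Sylow_Weps_full sylP)/Weps_word_mx; vm_compute.
Qed.
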